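(* If $\Gamma\vdash^{n_1} t(u,x.r)(u',y.r'):\sigma$ is derivable in $\cap J$ (with $x\notin\mathrm{fv}(u')\cup\mathrm{fv}(r')$), then there exist an environment $\Sigma\sqsubseteq\Gamma$ and $n_2\le n_1$ such that $\Sigma\vdash^{n_2} t(u,x.r(u',y.r')):\sigma$ is derivable in $\cap J$.
   Context: Terms $\mathtt T_J$: $t,u,r ::= x \mid \lambda x.t \mid t(u,y.r)$ ($y$ bound in $r$), up to $\alpha$-equivalence. System $\cap J$: types $\sigma,\tau ::= \alpha \mid \mathcal M\to\sigma$, $\mathcal M=[\sigma_i]_{i\in I}$ a finite possibly empty multiset; $\sqcup$ multiset union; environments map variables to multisets, $\wedge$ pointwise union, $\Gamma;x:\mathcal M$ extension with $x\notin\mathrm{dom}\,\Gamma$; $\Sigma\sqsubseteq\Gamma$ means $\Sigma(z)\subseteq\Gamma(z)$ (multiset inclusion) for every variable $z$. $\mathrm{ch}(\mathcal M)=\mathcal M$ if $\mathcal M\ne[\,]$, $\mathrm{ch}([\,])=[\tau]$ for an arbitrary $\tau$. Rules: (var) $x:[\sigma]\vdash x:\sigma$; (abs) from $\Gamma;x:\mathcal M\vdash t:\sigma$ infer $\Gamma\vdash\lambda x.t:\mathcal M\to\sigma$; (many) from $(\Gamma_i\vdash t:\sigma_i)_{i\in I}$, $I\ne\emptyset$, infer $\wedge_i\Gamma_i\vdash t:[\sigma_i]_{i\in I}$; (app) from $\Gamma\vdash t:\mathrm{ch}([\mathcal M_i\to\tau_i]_{i\in I})$, $\Delta\vdash u:\mathrm{ch}(\sqcup_i\mathcal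 M_i)$, $\Lambda;y:[\tau_i]_{i\in I}\vdash r:\sigma$ infer $\Gamma\wedge\Delta\wedge\Lambda\vdash t(u,y.r):\sigma$. $\vdash^n$ indicates a derivation of size $n$ = number of rule instances other than (many). *)

From Stdlib Require Import List Permutation Arith.
Import ListNotations.

(* JApp t u r  represents  t(u, y.r) ; r lives under one binder (y = index 0). *)
Inductive term : Type :=
| Var  : nat -> term
| Lam  : term -> term
| JApp : term -> term -> term -> term.

Fixpoint lift (k : nat) (t : term) : term :=
  match t with
  | Var n => Var (if k <=? n then S n else n)
  | Lam b => Lam (lift (S k) b)
  | JApp a b c => JApp (lift k a) (lift k b) (lift (S k) c)
  end.

(* sigma ::= alpha | M -> sigma, a multiset M being represented by a list,
   compared up to permutation wherever multisets are compared. *)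
Inductive ty : Type :=
| TAtom : nat -> ty
| TArr  : list ty -> ty -> ty.

Definition mset := list ty.

Definition msub (A B : mset) : Prop := exists C, Permutation B (A ++ C).

Definition env := nat -> mset.

Definition env_empty : env := fun _ => [].
Definition env_single (x : nat) (M : mset) : env :=
  fun z => if z =? x then M else [].
Definition env_union (G D : env) : env := fun z => G z ++ D z.
(* Γ ; x:M  with x the freshly bound variable (index 0) *)
Definition env_cons (M : mset) (G : env) : env :=
  fun z => match z with 0 => M | S z' => G z' end.
Definition env_tail (E : env) : env := fun z => E (S z).
Definition env_eq (G D : env) : Prop := forall z, Permutation (G z) (D z).
Definition env_sub (S G : env) : Prop := forall z, msub (S z) (G z).

(* der G t s n   :  G |-^n t : s   (n = number of rules other than (many))
   derm G t M n  :  G |-^n t : M   obtained by (many) with I nonempty     *)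
Inductive der : env -> term -> ty -> nat -> Prop :=
| d_var : forall G x s,
    env_eq G (env_single x [s]) ->
    der G (Var x) s 1
| d_abs : forall G E t M s n,
    der E t s n ->
    Permutation M (E 0) ->
    env_eq G (env_tail E) ->
    der G (Lam t) (TArr M s) (S n)
| d_app : forall G Gt Du E t u r s (l : list (mset * ty)) Mt Mu n1 n2 n3,
    (* ch([M_i -> tau_i]_{i in I}) *)
    (match l with
     | [] => exists tau, Mt = [tau]
     | _ => Mt = map (fun p => TArr (fst p) (snd p)) l
     end) ->
    derm Gt t Mt n1 ->
    (* ch(⊔_i M_i) *)
    (match concat (map fst l) with
     | [] => exists tau, Mu = [tau]
     | U => Permutation Mu U
     end) ->
    derm Du u Mu n2 ->
    (* Λ ; y:[tau_i]_{i in I} *)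
    der E r s n3 ->
    Permutation (E 0) (map snd l) ->
    env_eq G (env_union Gt (env_union Du (env_tail E))) ->
    der G (JApp t u r) s (S (n1 + n2 + n3))
with derm : env -> term -> mset -> nat -> Prop :=
| dm_one : forall G t s n,
    der G t s n -> derm G t [s] n
| dm_cons : forall G G1 D t s M n m,
    der G1 t s n -> derm D t M m ->
    env_eq G (env_union G1 D) ->
    derm G t (s :: M) (n + m).

From Stdlib Require Import List Permutation Arith Lia Setoid Morphisms.
Import ListNotations.

(* In a derivation of t(u,x.r)(u',y.r') the head t(u,x.r) is typed by (many),
   i.e. by one (app) rule per element of its multiset type.  These rules can
   be gathered into a single one: t and u receive the unions of their
   multisets and the continuation r receives the whole multiset, which is
   exactly what the outer application r(u',y.r') needs, u' and r' being
   weakened under the binder x.  Gathering replaces one (app) rule per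
   element by a single one and otherwise only drops the arbitrary singletons
   chosen by ch for empty multisets, so the environment can only shrink and
   the size only decrease. *)

Scheme der_mut := Induction for der Sort Prop
with derm_mut := Induction for derm Sort Prop.
Combined Scheme der_derm_mut from der_mut, derm_mut.

Lemma msub_refl A : msub A A.
Proof. exists []; now rewrite app_nil_r. Qed.

Lemma msub_trans A B C : msub A B -> msub B C -> msub A C.
Proof.
  intros [X HX] [Y HY]; exists (X ++ Y).
  now rewrite HY, HX, app_assoc.
Qed.

Lemma msub_app A B C D : msub A B -> msub C D -> msub (A ++ C) (B ++ D).
Proof.
  intros [X HX] [Y HY]; exists (X ++ Y).
  rewrite HX, HY, <- !app_assoc.
  apply Permutation_app_head, Permutation_app_swap_app.
Qed.

Lemma msub_app_l A B : msub A (A ++ B).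
Proof. now exists B. Qed.

Lemma msub_app_r A B : msub A (B ++ A).
Proof. exists B; apply Permutation_app_comm. Qed.

#[export] Instance env_eq_equiv : Equivalence env_eq.
Proof.
  split.
  - now intros G z.
  - intros G D H z; now symmetry.
  - intros G D F H1 H2 z; now rewrite (H1 z).
Qed.

#[export] Instance env_sub_preorder : PreOrder env_sub.
Proof.
  split.
  - intros G z; apply msub_refl.
  - intros G D F H1 H2 z; exact (msub_trans _ _ _ (H1 z) (H2 z)).
Qed.

#[export] Instance env_sub_proper : Proper (env_eq ==> env_eq ==> iff) env_sub.
Proof.
  intros G G' HG D D' HD; split; intros H z; destruct (H z) as [C HC]; exists C.
  - now rewrite <- (HD z), <- (HG z).
  - now rewrite (HD z), (HG z).
Qed.

#[export] Instance env_union_proper : Proper (env_eq ==> env_eq ==> env_eq) env_union.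
Proof. intros G G' HG D D' HD z; unfold env_union; now rewrite (HG z), (HD z). Qed.

Lemma env_sub_union G G' D D' :
  env_sub G G' -> env_sub D D' -> env_sub (env_union G D) (env_union G' D').
Proof. intros HG HD z; exact (msub_app _ _ _ _ (HG z) (HD z)). Qed.

Lemma env_sub_union_l G D : env_sub G (env_union G D).
Proof. intro z; apply msub_app_l. Qed.

Lemma env_sub_union_r G D : env_sub D (env_union G D).
Proof. intro z; apply msub_app_r. Qed.

Lemma env_union_assoc G D F :
  env_eq (env_union G (env_union D F)) (env_union (env_union G D) F).
Proof. intro z; unfold env_union; now rewrite app_assoc. Qed.

Lemma env_union_interchange A B C D :
  env_eq (env_union (env_union A B) (env_union C D))
         (env_union (env_union A C) (env_union B D)).
Proof.
  intro z; unfold env_union; rewrite <- !app_assoc.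
  apply Permutation_app_head, Permutation_app_swap_app.
Qed.

Definition env_ins (k : nat) (E : env) : env :=
  fun z => if z <? k then E z else if z =? k then [] else E (pred z).

#[export] Instance env_ins_proper k : Proper (env_eq ==> env_eq) (env_ins k).
Proof.
  intros G D H z; unfold env_ins.
  destruct (z <? k); [|destruct (z =? k)]; easy.
Qed.

Lemma env_ins_single k x M :
  env_eq (env_ins k (env_single x M)) (env_single (if k <=? x then S x else x) M).
Proof.
  intro z; unfold env_ins, env_single.
  destruct (Nat.leb_spec k x), (Nat.ltb_spec z k), (Nat.eqb_spec z k);
    repeat match goal with |- context [?a =? ?b] => destruct (Nat.eqb_spec a b) end;
    easy || lia.
Qed.

Lemma env_ins_union k G D :
  env_eq (env_ins k (env_union G D)) (env_union (env_ins k G) (env_ins k D)).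
Proof.
  intro z; unfold env_ins, env_union.
  destruct (z <? k); [|destruct (z =? k)]; easy.
Qed.

Lemma env_tail_ins k E : env_eq (env_tail (env_ins (S k) E)) (env_ins k (env_tail E)).
Proof.
  intro z; unfold env_tail, env_ins.
  change (S z <? S k) with (z <? k); change (S z =? S k) with (z =? k).
  destruct (Nat.ltb_spec z k), (Nat.eqb_spec z k); try easy.
  now replace (S (pred z)) with z by lia.
Qed.

Lemma der_derm_lift :
  (forall E t s n, der E t s n -> forall k, der (env_ins k E) (lift k t) s n) /\
  (forall E t M n, derm E t M n -> forall k, derm (env_ins k E) (lift k t) M n).
Proof.
  apply (der_derm_mut
    (fun E t s n _ => forall k, der (env_ins k E) (lift k t) s n)
    (fun E t M n _ => forall k, derm (env_ins k E) (lift k t) M n)).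
  - intros G x s HG k; apply d_var.
    now rewrite HG, env_ins_single.
  - intros G E t M s n _ IH HM HG k; eapply d_abs; [apply IH | exact HM |].
    now rewrite HG, env_tail_ins.
  - intros G Gt Du E t u r s l Mt Mu n1 n2 n3 Hl _ IHt Hu _ IHu _ IHr HE HG k.
    eapply d_app; [exact Hl | apply IHt | exact Hu | apply IHu | apply IHr | exact HE |].
    now rewrite HG, !env_ins_union, env_tail_ins.
  - intros G t s n _ IH k; apply dm_one, IH.
  - intros G G1 D t s M n m _ IH _ IHm HG k; eapply dm_cons; [apply IH | apply IHm |].
    now rewrite HG, env_ins_union.
Qed.

Lemma der_lift k E t s n : der E t s n -> der (env_ins k E) (lift k t) s n.
Proof. intro H; now apply der_derm_lift. Qed.

Lemma derm_lift k E t M n : derm E t M n -> derm (env_ins k E) (lift k t) M n.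
Proof. intro H; now apply der_derm_lift. Qed.

Lemma derm_app {G1 G2 t M1 M2 n1 n2} :
  derm G1 t M1 n1 -> derm G2 t M2 n2 ->
  derm (env_union G1 G2) t (M1 ++ M2) (n1 + n2).
Proof.
  intros H; revert G2 M2 n2; induction H as [G t s n Hd | G G1 D t s M n m Hd _ IH HG];
    intros G2 M2 n2 H2.
  - eapply dm_cons; [exact Hd | exact H2 | reflexivity].
  - rewrite <- Nat.add_assoc; eapply dm_cons; [exact Hd | apply IH, H2 |].
    now rewrite HG, env_union_assoc.
Qed.

(* The side conditions of (app): the index list [k] stands for a multiset via
   [P], and ch of an empty one is an arbitrary singleton. *)
Definition ch {A} (P : list A -> mset -> Prop) (k : list A) (M : mset) : Prop :=
  match k with [] => exists tau, M = [tau] | _ :: _ => P k M end.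

Definition arrows_of (l : list (mset * ty)) (M : mset) : Prop :=
  M = map (fun p => TArr (fst p) (snd p)) l.

Definition perm_of (U M : mset) : Prop := Permutation M U.

(* The alias pattern [U] in [d_app] is elaborated to [a :: k] with the list
   rebuilt, so ch agrees with it only up to case analysis. *)
Lemma ch_perm_of U M :
  ch perm_of U M <->
  match U with [] => exists tau, M = [tau] | a :: k => Permutation M (a :: k) end.
Proof. now destruct U. Qed.

Lemma arrows_of_app k1 k2 M1 M2 :
  arrows_of k1 M1 -> arrows_of k2 M2 -> arrows_of (k1 ++ k2) (M1 ++ M2).
Proof. unfold arrows_of; intros -> ->; now rewrite map_app. Qed.

Lemma perm_of_app k1 k2 M1 M2 :
  perm_of k1 M1 -> perm_of k2 M2 -> perm_of (k1 ++ k2) (M1 ++ M2).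
Proof. apply Permutation_app. Qed.

(* A singleton chosen for an empty index list is dropped: hence only an
   inclusion of environments and a bound on sizes. *)
Lemma derm_ch_app {A} {P : list A -> mset -> Prop} {G1 G2 t k1 k2 M1 M2 n1 n2} :
  (forall k1 k2 M1 M2, P k1 M1 -> P k2 M2 -> P (k1 ++ k2) (M1 ++ M2)) ->
  ch P k1 M1 -> derm G1 t M1 n1 -> ch P k2 M2 -> derm G2 t M2 n2 ->
  exists G M n, ch P (k1 ++ k2) M /\ derm G t M n /\
    env_sub G (env_union G1 G2) /\ n <= n1 + n2.
Proof.
  intros Papp H1 D1 H2 D2.
  destruct k1 as [|a k1].
  { exists G2, M2, n2; repeat split; auto using env_sub_union_r; lia. }
  destruct k2 as [|b k2].
  { exists G1, M1, n1; rewrite app_nil_r; repeat split; auto using env_sub_union_l; lia. }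
  exists (env_union G1 G2), (M1 ++ M2), (n1 + n2); repeat split.
  - exact (Papp _ _ _ _ H1 H2).
  - now apply derm_app.
  - reflexivity.
  - lia.
Qed.

Inductive app_many (G : env) (t u r : term) (M : mset) (n : nat) : Prop :=
| AppMany l Mt Mu Gt Gu E nt nu nr :
    ch arrows_of l Mt -> derm Gt t Mt nt ->
    ch perm_of (concat (map fst l)) Mu -> derm Gu u Mu nu ->
    derm E r M nr -> Permutation (E 0) (map snd l) ->
    env_sub (env_union Gt (env_union Gu (env_tail E))) G ->
    S (nt + nu + nr) <= n ->
    app_many G t u r M n.

Lemma app_many_der {G t u r s n} :
  der G (JApp t u r) s n -> app_many G t u r [s] n.
Proof.
  intro H; inversion H as [| | ? Gt Gu E ? ? ? ? l Mt Mu nt nu nr Hl Ht Hu Du Dr HE HG];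
    subst.
  eapply AppMany; [exact Hl | exact Ht | apply ch_perm_of, Hu | exact Du
                  | apply dm_one, Dr | exact HE | | lia].
  now rewrite HG.
Qed.

Lemma app_many_union {G1 G2 t u r M1 M2 n1 n2} :
  app_many G1 t u r M1 n1 -> app_many G2 t u r M2 n2 ->
  app_many (env_union G1 G2) t u r (M1 ++ M2) (n1 + n2).
Proof.
  intros [l1 Mt1 Mu1 Gt1 Gu1 E1 nt1 nu1 nr1 Hl1 Dt1 Hu1 Du1 Dr1 HE1 HG1 Hn1]
         [l2 Mt2 Mu2 Gt2 Gu2 E2 nt2 nu2 nr2 Hl2 Dt2 Hu2 Du2 Dr2 HE2 HG2 Hn2].
  destruct (derm_ch_app arrows_of_app Hl1 Dt1 Hl2 Dt2) as (Gt & Mt & nt & Hl & Dt & HGt & Hnt).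
  destruct (derm_ch_app perm_of_app Hu1 Du1 Hu2 Du2) as (Gu & Mu & nu & Hu & Du & HGu & Hnu).
  rewrite <- concat_app, <- map_app in Hu.
  eapply AppMany with (l := l1 ++ l2) (E := env_union E1 E2);
    [exact Hl | exact Dt | exact Hu | exact Du | exact (derm_app Dr1 Dr2) | | | lia].
  - unfold env_union; rewrite map_app; now apply Permutation_app.
  - transitivity (env_union (env_union Gt1 Gt2)
                    (env_union (env_union Gu1 Gu2) (env_union (env_tail E1) (env_tail E2)))).
    { apply env_sub_union; [exact HGt | apply env_sub_union; [exact HGu | reflexivity]]. }
    rewrite (env_union_interchange Gu1), env_union_interchange.
    now apply env_sub_union.
Qed.

Lemma app_many_sub G G' t u r M n :
  env_sub G G' -> app_many G t u r M n -> app_many G' t u r M n.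
Proof.
  intros HG' [l Mt Mu Gt Gu E nt nu nr Hl Dt Hu Du Dr HE HG Hn].
  eapply AppMany; eauto; now transitivity G.
Qed.

Lemma derm_JApp_app_many G t u r M n :
  derm G (JApp t u r) M n -> app_many G t u r M n.
Proof.
  remember (JApp t u r) as T eqn:HT.
  induction 1 as [G T s n Hd | G G1 D T s M n m Hd _ IH HG]; subst.
  - now apply app_many_der.
  - apply app_many_sub with (G := env_union G1 D); [now rewrite HG |].
    exact (app_many_union (app_many_der Hd) (IH eq_refl)).
Qed.

Theorem mainTheorem14 (G : env) (t u r u' r' : term) (s : ty) (n1 : nat) :
  der G (JApp (JApp t u r) u' r') s n1 ->
  exists (Sg : env) (n2 : nat),
    env_sub Sg G /\ n2 <= n1 /\
    der Sg (JApp t u (JApp r (lift 0 u') (lift 1 r'))) s n2.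
Proof.
  intro H.
  inversion H as [| | ? Gh Gu' E' ? ? ? ? l Mh Mu' nh nu' nr' Hl Dh Hu' Du' Dr' HE' HG];
    subst.
  apply derm_JApp_app_many in Dh as [l0 Mt Mu Gt Gu Er nt nu nr Hl0 Dt Hu Du Dr HEr HGh Hn].
  set (Es := env_union Er (env_union (env_ins 0 Gu') (env_tail (env_ins 1 E')))).
  assert (Dcont : der Es (JApp r (lift 0 u') (lift 1 r')) s (S (nr + nu' + nr'))).
  { eapply d_app; [exact Hl | exact Dr | exact Hu' | apply derm_lift, Du'
                  | apply der_lift, Dr' | exact HE' | reflexivity]. }
  exists (env_union Gt (env_union Gu (env_tail Es))), (S (nt + nu + S (nr + nu' + nr'))).
  split; [| split; [lia |]].
  - change (env_tail Es) with (env_union (env_tail Er) (env_union Gu' (env_tail E'))).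
    rewrite HG, (env_union_assoc Gu), (env_union_assoc Gt).
    apply env_sub_union; [exact HGh | reflexivity].
  - eapply d_app; [exact Hl0 | exact Dt | apply ch_perm_of, Hu | exact Du | exact Dcont | | reflexivity].
    unfold Es, env_union, env_ins; cbn; now rewrite !app_nil_r.
Qed.
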